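(* Let $G$ be a finite simple graph with a fixed total order on $E(G)$ and fix $\pi\in B_G$. Write $\nabla_G(\pi)=\{e_1<\dots<e_m\}$. Then \[\sum_{\sigma\in B_G,\ \sigma\supseteq\pi}(-1)^{\ell(\sigma)}=(-1)^{|C(G)|}\cdot N,\] where $N$ is the number of inclusion-wise maximal elements $T\in B_G$ with $T\supseteq\pi$ such that (if $m\ge1$) $e_1\notin T$, and for every $j>1$ with $e_j\in T$ there exists $i<j$ with $e_i\notin T$ such that $e_j$ lies on the unique cycle of $\mathcal{G}(T\cup\{e_i\})$ (the fundamental cycle of $e_i$ with respect to $T$).
   Context: A broken circuit is the edge set of a cycle of $G$ with its smallest edge removed; $B_G$ is the set of all $S\subseteq E(G)$ containing no broken circuit (each such $S$ is the edge set of a forest). For $S\subseteq E(G)$, $\mathcal{G}(S)=(V(G),S)$, $\ell(S)$ is the number of connected components of $\mathcal{G}(S)$, and $\nabla_G(S)$ is the set of edges of $G$ whose endpoints lie in different connected components of $\mathcal{G}(S)$. $|C(G)|$ is the number of connected components of $G$. *)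

From mathcomp Require Import all_boot all_order all_algebra.
Set Implicit Arguments. Unset Strict Implicit. Unset Printing Implicit Defensive.

(* A finite simple graph G = (V, E): V a finType, E a set of 2-element
   subsets of V.  An edge is a set {x, y} of two distinct vertices. *)
Section Graph.
Variable V : finType.
Notation edge := {set V}.

Definition adjS (S : {set edge}) : rel V :=
  fun x y => [exists e in S, e == [set x; y]] && (x != y).

Definition comp (S : {set edge}) (x : V) : {set V} :=
  [set y | connect (adjS S) x y].

Definition ell (S : {set edge}) : nat := #|[set comp S x | x : V]|.

Definition nabla (E S : {set edge}) : {set edge} :=
  [set e in E | [exists x : V, exists y : V,
     (e == [set x; y]) && ~~ connect (adjS S) x y]].

Definition is_cycle (E C : {set edge}) : bool :=
  [&& C \subset E, C != set0,
      [forall v : V, (#|[set e in C | v \in e]| == 0) ||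
                     (#|[set e in C | v \in e]| == 2)] &
      [forall x : V, forall y : V,
         ((x \in cover C) && (y \in cover C)) ==> connect (adjS C) x y]].

(* S contains no broken circuit (w.r.t. the total order on E given by rk):
   for every cycle C and its smallest edge e, C \ {e} is not a subset of S. *)
Definition noBC (E : {set edge}) (rk : edge -> nat) (S : {set edge}) : bool :=
  [forall C : {set edge}, is_cycle E C ==>
     [forall e in C, [forall f in C, rk e <= rk f] ==> ~~ (C :\ e \subset S)]].

Definition BG (E : {set edge}) (rk : edge -> nat) : {set {set edge}} :=
  [set S : {set edge} | (S \subset E) && noBC E rk S].

End Graph.

From Pilot Require Import Defs.
From mathcomp Require Import all_boot all_order all_algebra.
From mathcomp Require Import zify.
Import GRing.Theory.
Set Implicit Arguments. Unset Strict Implicit. Unset Printing Implicit Defensive.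

(* Process the edges of nabla(pi) in increasing rank.  Call S \supseteq pi in
   B_G ok for an edge e of nabla(pi) when e lies in the cycle-matroid closure
   of S and, if e \in S, e lies on the fundamental cycle of some earlier edge
   of nabla(pi) outside S.  Among the sets that are ok for every edge of rank
   < t, toggling the edge e of rank t is an involution on those that are not
   ok for e, and it changes l by exactly one because an edge of a set in B_G
   never lies in the closure of the rest.  So only the sets ok for every edge
   of nabla(pi) survive; each of them spans G, hence has l = |C(G)|, and they
   are exactly the maximal elements of B_G counted by N. *)

Lemma card_set_cond (T : finType) (A : {set T}) (P : pred T) :
  #|[set x in A | P x]| = \sum_(x in A) (P x : nat).
Proof.
rewrite -sum1_card big_mkcond [RHS]big_mkcond /=.
by apply: eq_bigr => x _; rewrite !inE; case: (x \in A); case: (P x).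
Qed.

Lemma card_imset_merge (aT rT : finType) (f : aT -> rT) (A : {set aT}) a b :
  a \in A -> b \in A -> a != b -> f a = f b -> {in A :\ a &, injective f} ->
  (#|f @: A|).+1 = #|A|.
Proof.
move=> aA bA ab fab finj.
have -> : f @: A = f @: (A :\ a).
  apply/setP => y; apply/imsetP/imsetP => -[x xA ->]; last first.
    by exists x; move: xA; rewrite inE => /andP[].
  case: (x =P a) => [->|/eqP xa]; first by exists b; rewrite // !inE eq_sym ab.
  by exists x; rewrite // !inE xa.
by rewrite card_in_imset // (cardsD1 a A) aA.
Qed.

Section SignReversingInvolution.
Local Open Scope ring_scope.

Lemma sum_sign_involution (T : finType) (P : pred T) (g : T -> T) (w : T -> int) :
  involutive g -> (forall x, P x -> P (g x) -> w (g x) = - w x) ->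
  \sum_(x | P x) w x = \sum_(x | P x && ~~ P (g x)) w x.
Proof.
move=> gK gw; rewrite (bigID (fun x => P (g x))) /=.
suff s0 : \sum_(x | P x && P (g x)) w x = 0 by rewrite s0 add0r.
set s := LHS; suff : s = - s by lia.
rewrite {1}/s (reindex_inj (inv_inj gK)) /= /s -sumrN.
apply: eq_big => x; first by rewrite gK andbC.
by move=> /andP[Pgx]; rewrite gK => Px; apply: gw.
Qed.

End SignReversingInvolution.

Section Connectivity.
Variable V : finType.
Notation edge := {set V}.
Implicit Types (S A C E : {set edge}) (e f : edge) (x y z a b : V).

Lemma adjS_sym S : symmetric (adjS S).
Proof. by move=> x y; rewrite /adjS setUC eq_sym. Qed.

Lemma connect_adjS_sym S : connect_sym (adjS S).
Proof. exact: sym_connect_sym (adjS_sym S). Qed.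

Lemma adjS_subset S S' : S \subset S' -> subrel (adjS S) (adjS S').
Proof.
move=> sub x y /andP[/existsP[f /andP[fS ef]] xy]; apply/andP; split=> //.
by apply/existsP; exists f; rewrite (subsetP sub).
Qed.

Lemma connect_adjS_subset S S' :
  S \subset S' -> subrel (connect (adjS S)) (connect (adjS S')).
Proof. by move=> sub; apply: connect_sub => x y /(adjS_subset sub)/connect1. Qed.

Lemma set2_eq_cases x y a b :
  [set x; y] = [set a; b] -> (x = a /\ y = b) \/ (x = b /\ y = a).
Proof.
move=> h.
have xi : x \in [set a; b] by rewrite -h set21.
have yi : y \in [set a; b] by rewrite -h set22.
have ai : a \in [set x; y] by rewrite h set21.
have bi : b \in [set x; y] by rewrite h set22.
move: xi yi ai bi; rewrite !inE.
by do 4 (case/orP=> /eqP ?); subst; auto.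
Qed.

Lemma adjS_set2 S x y : x != y -> [set x; y] \in S -> adjS S x y.
Proof.
by move=> xy eS; rewrite /adjS xy andbT; apply/existsP; exists [set x; y]; rewrite eS eqxx.
Qed.

Lemma adjS_mem S x y : adjS S x y -> [set x; y] \in S /\ x != y.
Proof. by case/andP=> /existsP[f /andP[fS /eqP <-]] ->. Qed.

(* [spanned S e]: e lies in the closure of S in the cycle matroid. *)
Definition spanned S e :=
  [exists x, exists y, (e == [set x; y]) && connect (adjS S) x y].

Lemma spanned_set2 S x y : spanned S [set x; y] = connect (adjS S) x y.
Proof.
apply/idP/idP => [/existsP[u /existsP[w /andP[/eqP h c]]] | c].
  by case: (set2_eq_cases h) => -[-> ->] //; rewrite connect_adjS_sym.
by apply/existsP; exists x; apply/existsP; exists y; rewrite eqxx.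
Qed.

Lemma spanned_subset S S' e : S \subset S' -> spanned S e -> spanned S' e.
Proof.
move=> sub /existsP[x /existsP[y /andP[/eqP -> c]]].
by rewrite spanned_set2; apply: connect_adjS_subset c.
Qed.

Lemma spanned_mem S e : #|e| = 2 -> e \in S -> spanned S e.
Proof.
move/eqP/cards2P=> [x [y [xy ->]]] eS.
by rewrite spanned_set2; apply/connect1/adjS_set2.
Qed.

Lemma connect_adjS_spannedU S A :
  {in A, forall f, spanned S f} ->
  subrel (connect (adjS (S :|: A))) (connect (adjS S)).
Proof.
move=> hA; apply: connect_sub => x y /adjS_mem[]; rewrite inE => /orP[fS|fA] xy.
  exact/connect1/adjS_set2.
by rewrite -spanned_set2; apply: hA.
Qed.

Lemma spanned_spannedU S A e :
  {in A, forall f, spanned S f} -> spanned (S :|: A) e -> spanned S e.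
Proof.
move=> hA /existsP[x /existsP[y /andP[/eqP -> c]]].
by rewrite spanned_set2; apply: connect_adjS_spannedU c.
Qed.

Lemma connect_adjS_setU1 S a b x y :
  connect (adjS (S :|: [set [set a; b]])) x y ->
  [\/ connect (adjS S) x y, connect (adjS S) x a && connect (adjS S) b y
    | connect (adjS S) x b && connect (adjS S) a y].
Proof.
move/connectP=> [p pth ->]; elim: p x pth => [|z p IH] x /=.
  by move=> _; apply: Or31; exact: connect0.
have step u v w : u != v -> [set u; v] \in S -> connect (adjS S) v w ->
    connect (adjS S) u w.
  by move=> uv uvS; apply/connect_trans/connect1/adjS_set2.
case/andP=> /adjS_mem[]; rewrite inE => /orP[zS|/set1P h] xz
  /IH [c|/andP[c1 c2]|/andP[c1 c2]].
- by apply: Or31; apply: step c.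
- by apply: Or32; rewrite c2 (step _ _ _ xz zS c1).
- by apply: Or33; rewrite c2 (step _ _ _ xz zS c1).
- case: (set2_eq_cases h) => -[? ?]; subst; first by apply: Or32; rewrite connect0.
  by apply: Or33; rewrite connect0.
- case: (set2_eq_cases h) => -[? ?]; subst; first by apply: Or32; rewrite connect0.
  by apply: Or31.
- case: (set2_eq_cases h) => -[? ?]; subst; first by apply: Or31.
  by apply: Or33; rewrite connect0.
Qed.

Lemma spanned_exchange S e f : #|e| = 2 -> #|f| = 2 ->
  ~~ spanned S e -> spanned (S :|: [set f]) e -> spanned (S :|: [set e]) f.
Proof.
move/eqP/cards2P=> [a [b [ab ->]]] /eqP/cards2P [c [d [cd ->]]].
rewrite !spanned_set2 => nab /connect_adjS_setU1 [h|/andP[h1 h2]|/andP[h1 h2]].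
- by rewrite h in nab.
- have m := connect_adjS_subset (subsetUl S [set [set a; b]]).
  have eab : connect (adjS (S :|: [set [set a; b]])) a b.
    by apply/connect1/adjS_set2; rewrite // !inE eqxx orbT.
  rewrite connect_adjS_sym in h1.
  by apply: connect_trans (m _ _ h1) (connect_trans eab _); apply: m;
    rewrite connect_adjS_sym.
- have m := connect_adjS_subset (subsetUl S [set [set a; b]]).
  have eba : connect (adjS (S :|: [set [set a; b]])) b a.
    by rewrite connect_adjS_sym; apply/connect1/adjS_set2; rewrite // !inE eqxx orbT.
  exact: connect_trans (m _ _ h2) (connect_trans eba (m _ _ h1)).
Qed.


Lemma in_comp S x y : (y \in Defs.comp S x) = connect (adjS S) x y.
Proof. by rewrite inE. Qed.

Lemma eq_comp S x y : (Defs.comp S x == Defs.comp S y) = connect (adjS S) x y.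
Proof.
apply/eqP/idP => [h|c]; first by rewrite -in_comp h in_comp connect0.
apply/setP => z; rewrite !in_comp; apply/idP/idP; last exact: connect_trans.
by apply: connect_trans; rewrite connect_adjS_sym.
Qed.

Lemma comp_setU1 S a b x : a != b ->
  Defs.comp (S :|: [set [set a; b]]) x =
  if x \in Defs.comp S a :|: Defs.comp S b then Defs.comp S a :|: Defs.comp S b
  else Defs.comp S x.
Proof.
move=> ab; set S' := S :|: _; set U := _ :|: _.
have m := connect_adjS_subset (subsetUl S [set [set a; b]]).
have eab : connect (adjS S') a b by apply/connect1/adjS_set2; rewrite // !inE eqxx orbT.
have toa z : z \in U -> connect (adjS S') z a.
  rewrite !inE ?in_comp connect_adjS_sym => /orP[/m //|bz].
  by rewrite connect_adjS_sym; apply: connect_trans eab (m _ _ bz).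
have U_closed z y : z \in U -> connect (adjS S) z y -> y \in U.
  by rewrite !inE ?in_comp => /orP[] az zy; rewrite (connect_trans az zy) ?orbT.
apply/setP => y; rewrite in_comp; case: ifP => xU.
  apply/idP/idP => [|yU]; last by apply: connect_trans (toa x xU) _; rewrite connect_adjS_sym toa.
  case/connect_adjS_setU1 => [xy|/andP[_ b_y]|/andP[_ ay]]; first exact: U_closed xy.
    by rewrite !inE ?in_comp b_y orbT.
  by rewrite !inE ?in_comp ay.
rewrite in_comp; apply/idP/idP; last exact: m.
case/connect_adjS_setU1 => [//|/andP[xa _]|/andP[xb _]]; move/negbT: xU; rewrite !inE ?in_comp.
  by rewrite connect_adjS_sym xa.
by rewrite (connect_adjS_sym S b) xb orbT.
Qed.

Lemma ell_setU1_bridge S a b : a != b -> ~~ connect (adjS S) a b ->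
  (ell (S :|: [set [set a; b]])).+1 = ell S.
Proof.
move=> ab nab; rewrite /ell.
set A := [set Defs.comp S x | x : V].
set ca := Defs.comp S a; set cb := Defs.comp S b.
pose g (K : {set V}) := if K \in [set ca; cb] then ca :|: cb else K.
have -> : [set Defs.comp (S :|: [set [set a; b]]) x | x : V] = g @: A.
  rewrite -imset_comp; apply: eq_imset => x /=; rewrite comp_setU1 // /g !inE.
  by rewrite ?in_comp !eq_comp !(connect_adjS_sym S x).
have caA : ca \in A by apply/imsetP; exists a.
have a_ca (K : {set V}) : K \in A -> a \in K -> K = ca.
  by case/imsetP => z _ ->; rewrite in_comp -eq_comp => /eqP.
apply: (@card_imset_merge _ _ g A ca cb) => //.
- by apply/imsetP; exists b.
- by rewrite eq_comp.
- by rewrite /g !inE !eqxx orbT.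
move=> K L; rewrite !inE => /andP[Kca KA] /andP[Lca LA].
rewrite /g !inE (negbTE Kca) (negbTE Lca) /=.
have aU : a \in ca :|: cb by rewrite !inE ?in_comp connect0.
case: eqP => [->|_]; case: eqP => [->|_] //.
  by move=> UL; move: aU; rewrite UL => /(a_ca _ LA)/eqP; rewrite (negbTE Lca).
by move=> KU; move: aU; rewrite -KU => /(a_ca _ KA)/eqP; rewrite (negbTE Kca).
Qed.


Definition deg S v := #|[set f in S | v \in f]|.

Lemma comp_deg_sum_even S x : {in S, forall f, #|f| = 2} ->
  ~~ odd (\sum_(v in Defs.comp S x) deg S v).
Proof.
move=> S2; set K := Defs.comp S x.
have -> : \sum_(v in K) deg S v = \sum_(f in S) #|[set v in K | v \in f]|.
  rewrite /deg; under eq_bigr => v _ do rewrite card_set_cond.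
  by rewrite exchange_big; apply: eq_bigr => f _; rewrite card_set_cond.
apply: (big_ind (fun n => ~~ odd n)) => // [m n|f fS].
  by move=> /negbTE hm /negbTE hn; rewrite oddD hm hn.
have /eqP/cards2P[u [w [uw ef]]] := S2 f fS.
have uwS : connect (adjS S) u w by apply/connect1/adjS_set2; rewrite -?ef.
have wK : connect (adjS S) x w = connect (adjS S) x u.
  apply/idP/idP => h; apply: connect_trans h _ => //.
  by rewrite connect_adjS_sym.
have -> : [set v in K | v \in f] = if connect (adjS S) x u then f else set0.
  apply/setP => v; rewrite !inE ef !inE; case: ifP => xu; rewrite ?inE.
    by rewrite andb_idl // => /orP[] /eqP ->; rewrite ?wK xu.
  by apply/negbTE/negP => /andP[xv /orP[] /eqP vuw]; move: xv; rewrite vuw ?wK xu.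
by case: ifP; rewrite ?cards0 // ef cards2 uw.
Qed.

Lemma cycle_edge_spanned E C e : {in E, forall f, #|f| = 2} ->
  is_cycle E C -> e \in C -> spanned (C :\ e) e.
Proof.
move=> E2 /and4P[sCE _ /forallP degC _] eC.
have C2 : {in C :\ e, forall f, #|f| = 2}.
  by move=> f; rewrite inE => /andP[_ /(subsetP sCE)/E2].
have /eqP/cards2P[x [y [xy ee]]] := E2 e (subsetP sCE e eC).
rewrite {2}ee spanned_set2; apply/idPn => nxy.
have degx : deg (C :\ e) x = 1.
  have eCx : e \in [set f in C | x \in f] by rewrite !inE eC ee !inE eqxx.
  have := degC x; rewrite /deg (cardsD1 e) eCx /= add1n.
  have -> : [set f in C :\ e | x \in f] = [set f in C | x \in f] :\ e.
    by apply/setP => f; rewrite !inE andbA.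
  by move=> /eqP [].
have degv v : v \in Defs.comp (C :\ e) x -> v != x -> ~~ odd (deg (C :\ e) v).
  move=> vK vx; have vy : v != y by apply: contraNneq nxy => <-; rewrite -in_comp.
  suff -> : deg (C :\ e) v = deg C v by rewrite /deg; case/orP: (degC v) => /eqP ->.
  rewrite /deg; apply: eq_card => f; rewrite !inE.
  case: (f =P e) => [->|_] //=.
  by rewrite eC ee !inE (negbTE vx) (negbTE vy).
have := comp_deg_sum_even x C2; rewrite (bigD1 x) ?in_comp ?connect0 //= degx.
rewrite /= negbK; apply/negP.
apply: (big_ind (fun n => ~~ odd n)) => // [m n|v /andP[]].
  by move=> /negbTE hm /negbTE hn; rewrite oddD hm hn.
exact: degv.
Qed.

End Connectivity.

Lemma ordS_neq n (j : 'I_n) : 2 < n -> ordS j != j.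
Proof.
move=> hn; apply/eqP => /(congr1 val) /=; have := ltn_ord j.
case: (ltngtP j.+1 n) => h hj.
- by rewrite modn_small //; lia.
- lia.
- by rewrite h modnn; lia.
Qed.

Lemma ordS_neq_ord_pred n (j : 'I_n) : 2 < n -> ordS j != ord_pred j.
Proof.
move=> hn; apply/eqP => /(congr1 val) /=; have := ltn_ord j.
move=> hj h.
have e1 : j.+1 %% n = if j.+1 == n then 0 else j.+1.
  case: eqP => [->|ne]; first by rewrite modnn.
  by rewrite modn_small //; lia.
have e2 : (j + n).-1 %% n = if (j == 0 :> nat) then n.-1 else j.-1.
  case: eqP => [->|ne]; first by rewrite add0n modn_small //; lia.
  have -> : (j + n).-1 = j.-1 + n by rewrite -!subn1; lia.
  by rewrite modnDr modn_small //; lia.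
move: h; rewrite e1 e2; do 2 case: eqP => ?; lia.
Qed.

Section FundamentalCycle.
Variable V : finType.
Notation edge := {set V}.
Implicit Types (S E : {set edge}) (a b : V).

Definition ring_edges n (vt : 'I_n -> V) := [set [set vt i; vt (ordS i)] | i : 'I_n].

Lemma ring_edges_at n (vt : 'I_n -> V) j : 2 < n -> injective vt ->
  #|[set f in ring_edges vt | vt j \in f]| = 2.
Proof.
move=> hn inj.
have -> : [set f in ring_edges vt | vt j \in f] =
    [set [set vt j; vt (ordS j)]; [set vt (ord_pred j); vt j]].
  apply/setP => f; rewrite !inE; apply/idP/idP.
    case/andP => /imsetP[i _ ->]; rewrite !inE => /orP[] /eqP /inj ->.
      by rewrite eqxx.
    by rewrite ordSK eqxx orbT.
  case/orP => /eqP ->; first by rewrite set21 andbT; apply/imsetP; exists j.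
  by rewrite set22 andbT; apply/imsetP; exists (ord_pred j); rewrite ?ord_predK.
rewrite cards2; suff -> : [set vt j; vt (ordS j)] != [set vt (ord_pred j); vt j] by [].
apply/eqP => /set2_eq_cases [[_ /inj h]|[_ /inj h]].
  by have := ordS_neq j hn; rewrite h eqxx.
by have := ordS_neq_ord_pred j hn; rewrite h eqxx.
Qed.

Lemma is_cycle_ring E n (vt : 'I_n -> V) : 2 < n -> injective vt ->
  (forall i, [set vt i; vt (ordS i)] \in E) -> is_cycle E (ring_edges vt).
Proof.
move=> hn inj hE; set C := ring_edges vt.
have n0 : 0 < n by lia.
pose i0 : 'I_n := Ordinal n0.
have adjC i : adjS C (vt i) (vt (ordS i)).
  apply: adjS_set2; last by apply/imsetP; exists i.
  by apply/eqP => /inj /eqP; rewrite eq_sym (negbTE (ordS_neq i hn)).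
have conn0 i : connect (adjS C) (vt i0) (vt i).
  case: i => m; elim: m => [|m IH] hm.
    by rewrite (_ : Ordinal hm = i0) ?connect0 //; exact: val_inj.
  have hm' : m < n by lia.
  apply: connect_trans (IH hm') (connect1 _).
  by rewrite (_ : Ordinal hm = ordS (Ordinal hm')) //; apply: val_inj => /=; rewrite modn_small.
have conn0_cover x : x \in cover C -> connect (adjS C) (vt i0) x.
  by case/bigcupP => _ /imsetP[i _ ->]; rewrite !inE => /orP[] /eqP ->; apply: conn0.
apply/and4P; split.
- by apply/subsetP => f /imsetP[i _ ->].
- by apply/set0Pn; exists [set vt i0; vt (ordS i0)]; apply/imsetP; exists i0.
- apply/forallP => v; case: (boolP [exists j, vt j == v]) => [/existsP[j /eqP <-]|nv].
    by rewrite ring_edges_at ?orbT.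
  apply/orP; left; rewrite cards_eq0; apply/eqP/setP => f; rewrite !inE.
  apply/negbTE/negP => /andP[/imsetP[i _ ->]]; rewrite !inE => /orP[] /eqP h.
    by move/existsP: nv; apply; exists i; rewrite h.
  by move/existsP: nv; apply; exists (ordS i); rewrite h.
- apply/forallP => x; apply/forallP => y; apply/implyP => /andP[/conn0_cover hx /conn0_cover].
  by apply: connect_trans; rewrite connect_adjS_sym.
Qed.

Lemma fundamental_cycle E S a b : S \subset E -> [set a; b] \in E -> a != b ->
  [set a; b] \notin S -> connect (adjS S) a b ->
  exists C, [/\ is_cycle E C, C \subset S :|: [set [set a; b]] & [set a; b] \in C].
Proof.
move=> sSE eE ab eS /connectP[p0 pth0 lst0].
move: eE ab eS; rewrite lst0; case: (shortenP pth0) => p pth uq _.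
move lst: (last a p) => b'; clear lst0 b => eE ab eS; rename b' into b.
have hn : 2 < size (a :: p).
  move: pth uq lst; case: p => [|z [|z' p']] //=.
    by move=> _ _ h; rewrite h eqxx in ab.
  by move=> /andP[/adjS_mem[h _] _] _ hz; subst; rewrite h in eS.
set c := a :: p in hn *; set n := size c in hn *.
pose vt (i : 'I_n) := nth a c i.
have inj : injective vt by move=> i j /eqP; rewrite /vt nth_uniq // => /eqP /val_inj.
have edges i : [set vt i; vt (ordS i)] \in S :|: [set [set a; b]].
  rewrite /vt /=; case: (ltngtP i.+1 n) => h.
  - rewrite modn_small // inE; apply/orP; left.
    have hi : i < size p by move: h; rewrite /n /c /=.
    by case/adjS_mem: (pathP a pth i hi).
  - by have := ltn_ord i; lia.
  - rewrite h modnn /= inE; apply/orP; right.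
    have -> : nth a c i = b.
      by rewrite -lst /c (last_nth a) (_ : val i = size p) //; move: h; rewrite /n /c /=; lia.
    by rewrite setUC inE.
exists (ring_edges vt); split.
- apply: is_cycle_ring => // i; have := edges i; rewrite inE => /orP[/(subsetP sSE)//|].
  by rewrite inE => /eqP ->.
- by apply/subsetP => f /imsetP[i _ ->].
- have hn0 : n.-1 < n by lia.
  apply/imsetP; exists (Ordinal hn0) => //; rewrite /vt /=.
  have -> : n.-1.+1 %% n = 0 by rewrite prednK ?modnn //; lia.
  by rewrite -lst /c (last_nth a) setUC.
Qed.

End FundamentalCycle.

Section NoBrokenCircuit.
Variable V : finType.
Notation edge := {set V}.
Variable E : {set edge}.
Variable rk : edge -> nat.
Hypothesis HE : forall e, e \in E -> #|e| = 2.
Hypothesis Hrk : {in E &, injective rk}.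
Implicit Types (S T C : {set edge}) (e f : edge).

Lemma BG_subE S : S \in BG E rk -> S \subset E.
Proof. by rewrite inE => /andP[]. Qed.

Lemma BG_subset S S' : S \in BG E rk -> S' \subset S -> S' \in BG E rk.
Proof.
rewrite !inE => /andP[sE /forallP nb] sub; rewrite (subset_trans sub sE) /=.
apply/forallP => C; apply/implyP => cC; apply/forallP => e; apply/implyP => eC.
apply/implyP => me; have := nb C; rewrite cC /= => /forallP /(_ e); rewrite eC /= me /=.
by apply: contra => h; apply: subset_trans h sub.
Qed.

Lemma edge_set2 e : e \in E -> exists a b, a != b /\ e = [set a; b].
Proof. by move/HE/eqP/cards2P. Qed.

Lemma BG_broken_circuit S C m : S \in BG E rk -> is_cycle E C -> m \in C ->
  (forall f, f \in C -> rk m <= rk f) -> ~~ (C :\ m \subset S).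
Proof.
rewrite inE => /andP[_ /forallP /(_ C)] + cC mC mmin; rewrite cC /= => /forallP /(_ m).
by rewrite mC /=; have -> // : [forall f in C, rk m <= rk f] by apply/forallP => f; apply/implyP; apply: mmin.
Qed.

Lemma BG_setU1_nspanned S e : S \subset E -> e \in E -> e \notin S ->
  S :|: [set e] \in BG E rk -> ~~ spanned S e.
Proof.
move=> sE eE eS hB; apply/negP => hi.
have [a [b [ab ee]]] := edge_set2 eE.
move: hi eS eE hB; rewrite ee spanned_set2 => hc eS eE hB.
have [C [cC sub eC]] := fundamental_cycle sE eE ab eS hc.
have [m mC mmin] : exists2 m, m \in C & forall f, f \in C -> rk m <= rk f.
  by case/and4P: cC => _ /set0Pn [f0 f0C] _ _; case: (arg_minnP rk f0C) => m; exists m.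
by move/negP: (BG_broken_circuit hB cC mC mmin); apply; apply: subset_trans (subsetDl _ _) sub.
Qed.

Lemma BG_setD1_nspanned S e : S \in BG E rk -> e \in S -> ~~ spanned (S :\ e) e.
Proof.
move=> hB eS; have sE := BG_subE hB.
apply: BG_setU1_nspanned; rewrite ?setD11 //.
- exact: subset_trans (subsetDl _ _) sE.
- exact: subsetP sE e eS.
- by rewrite setUC setD1K.
Qed.

(* A new broken circuit would have to use e, and then its minimal edge m
   would be spanned by S, so e would be spanned by S as well. *)
Lemma BG_setU1 S e : S \in BG E rk -> e \in E -> ~~ spanned S e ->
  (forall f, f \in E -> rk f < rk e -> spanned S f) -> S :|: [set e] \in BG E rk.
Proof.
move=> hB eE ne hf; have sE := BG_subE hB.
rewrite inE subUset sE sub1set eE /=.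
apply/forallP => C; apply/implyP => cC; apply/forallP => m; apply/implyP => mC.
apply/implyP => /forallP mmin'; apply/negP => sub.
have mmin f : f \in C -> rk m <= rk f by move=> fC; have := mmin' f; rewrite fC.
have sCE : C \subset E by case/and4P: cC.
case: (boolP (e \in C)) => eC; last first.
  move/negP: (BG_broken_circuit hB cC mC mmin); apply; apply/subsetP => f fC.
  have := subsetP sub f fC; rewrite !inE => /orP[//|/eqP fe].
  by move: fC; rewrite inE fe (negbTE eC) andbF.
have Ce := cycle_edge_spanned HE cC eC.
case: (m =P e) => [me|/eqP nme].
  apply: (negP ne); apply: spanned_subset Ce; apply/subsetP => f; rewrite -me => fC.
  have := subsetP sub f fC; rewrite !inE; move: fC; rewrite !inE => /andP[fm _].
  by rewrite me in fm; rewrite (negbTE fm) orbF.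
have rme : rk m < rk e.
  rewrite ltn_neqAle mmin // andbT; apply: contra nme => /eqP h.
  by apply/eqP/Hrk => //; exact: subsetP sCE m mC.
have Sm : spanned S m by apply: hf rme; exact: subsetP sCE m mC.
apply: (negP ne); apply: (spanned_spannedU (A := [set m])); first by move=> f /set1P ->.
apply: spanned_subset Ce; apply/subsetP => f; rewrite !inE => /andP[fe fC].
case: (f =P m) => [->|/eqP fm]; first by rewrite orbT.
by have := subsetP sub f; rewrite !inE fC fm (negbTE fe) /= orbF; apply.
Qed.

Lemma in_nabla S e : e \in E -> (e \in nabla E S) = ~~ spanned S e.
Proof.
move=> eE; have [a [b [ab ee]]] := edge_set2 eE.
rewrite ee in eE *; rewrite spanned_set2 inE eE /=; apply/idP/idP.
  case/existsP => x /existsP [y /andP[/eqP h nc]].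
  by case: (set2_eq_cases h) => -[-> ->] //; rewrite connect_adjS_sym.
by move=> h; apply/existsP; exists a; apply/existsP; exists b; rewrite eqxx.
Qed.

Lemma ell_spanning S : S \subset E -> (forall e, e \in E -> spanned S e) -> ell S = ell E.
Proof.
move=> sE hs; rewrite /ell (_ : [set Defs.comp S x | x : V] = [set Defs.comp E x | x : V]) //.
apply: eq_imset => x; apply/setP => y.
rewrite !in_comp; apply/idP/idP; first exact: connect_adjS_subset.
by move=> xy; apply: (connect_adjS_spannedU (A := E)) => //; rewrite (setUidPr sE).
Qed.

Lemma ell_setU1_BG S e : S \in BG E rk -> e \in E -> e \notin S ->
  S :|: [set e] \in BG E rk -> (ell (S :|: [set e])).+1 = ell S.
Proof.
move=> hB eE eS hB'; have [a [b [ab ee]]] := edge_set2 eE.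
have := BG_setU1_nspanned (BG_subE hB) eE eS hB'.
by rewrite ee spanned_set2; apply: ell_setU1_bridge.
Qed.

Lemma maxset_BG_spanning T : maxset (fun S => S \in BG E rk) T ->
  forall f, f \in E -> spanned T f.
Proof.
move=> Tmax f fE; case: (boolP (spanned T f)) => // nf.
have P0 : [pred g | (g \in E) && ~~ spanned T g] f by rewrite /= fE nf.
case: (arg_minnP rk P0) => g /andP[gE ng] gmin.
have hB' : T :|: [set g] \in BG E rk.
  apply: BG_setU1 => //; first exact: maxsetp Tmax.
  move=> h hE hr; case: (boolP (spanned T h)) => // nh.
  by have := gmin h; rewrite /= hE nh leqNgt hr => /(_ isT).
case/maxsetP: Tmax => _ /(_ _ hB' (subsetUl _ _)) TgT.
by move: ng; rewrite spanned_mem ?HE // -TgT !inE eqxx orbT.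
Qed.

Lemma spanning_BG_maxset T : T \in BG E rk -> (forall f, f \in E -> spanned T f) ->
  maxset (fun S => S \in BG E rk) T.
Proof.
move=> hB sp; apply/maxsetP; split => // U hU sTU; apply/eqP.
rewrite eqEsubset sTU andbT; apply/subsetP => f fU; apply/idPn => fT.
have fE := subsetP (BG_subE hU) f fU.
have hB' : T :|: [set f] \in BG E rk by apply: BG_subset hU _; rewrite subUset sTU sub1set fU.
by have := BG_setU1_nspanned (BG_subE hB) fE fT hB'; rewrite sp.
Qed.

Definition toggle e S := if e \in S then S :\ e else S :|: [set e].

Lemma toggleK e : involutive (toggle e).
Proof.
move=> S; rewrite /toggle; case: (boolP (e \in S)) => eS.
  by rewrite !inE eqxx /= setUC setD1K.
by rewrite !inE eqxx orbT setUC setU1K.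
Qed.

Lemma sign_toggle e S : e \in E -> S \in BG E rk -> toggle e S \in BG E rk ->
  ((-1) ^+ ell (toggle e S) = - (-1) ^+ ell S :> int)%R.
Proof.
rewrite /toggle => eE hB; case: ifP => eS hB'.
  have := ell_setU1_BG (S := S :\ e) hB' eE; rewrite setD11 setUC setD1K // => <- //.
  by rewrite exprS mulN1r.
by rewrite -(ell_setU1_BG hB eE) ?eS // exprS mulN1r opprK.
Qed.

End NoBrokenCircuit.

Section NablaSweep.
Variable V : finType.
Notation edge := {set V}.
Variable E : {set edge}.
Variable rk : edge -> nat.
Hypothesis HE : forall e, e \in E -> #|e| = 2.
Hypothesis Hrk : {in E &, injective rk}.
Variable pi : {set edge}.
Implicit Types (S T C : {set edge}) (e f k : edge).

(* For k outside S but spanned by S, [~~ spanned (S :\ e) k] says that e lies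
   on the fundamental cycle of k with respect to S. *)
Definition nabla_ok S e := spanned S e && ((e \in S) ==>
  [exists k in nabla E pi, [&& rk k < rk e, k \notin S & ~~ spanned (S :\ e) k]]).

Definition ok_upto t S := [&& S \in BG E rk, pi \subset S &
  [forall e in nabla E pi, (rk e < t) ==> nabla_ok S e]].

Lemma nabla_subE e : e \in nabla E pi -> e \in E.
Proof. by rewrite inE => /andP[]. Qed.

Lemma nabla_notin_pi e : e \in nabla E pi -> e \notin pi.
Proof.
move=> en; have := en; rewrite (in_nabla HE) ?nabla_subE //; apply: contra.
exact/spanned_mem/HE/nabla_subE.
Qed.

Lemma ok_uptoP t S f : ok_upto t S -> f \in nabla E pi -> rk f < t -> nabla_ok S f.
Proof. by case/and3P=> _ _ /forallP /(_ f) + fn ft; rewrite fn ft. Qed.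

Lemma ok_upto_spanned t S f : ok_upto t S -> f \in E -> rk f < t -> spanned S f.
Proof.
move=> ok fE ft; case: (boolP (f \in nabla E pi)) => fn.
  by case/andP: (ok_uptoP ok fn ft).
have := fn; rewrite (in_nabla HE) // negbK; apply: spanned_subset.
by case/and3P: ok.
Qed.

Lemma ok_upto0 S : ok_upto 0 S = (S \in BG E rk) && (pi \subset S).
Proof.
rewrite /ok_upto; case: (S \in BG E rk); case: (pi \subset S) => //=.
by apply/forallP => e; apply/implyP.
Qed.

Lemma ok_upto_succ t e S : e \in nabla E pi -> rk e = t ->
  ok_upto t.+1 S = ok_upto t S && nabla_ok S e.
Proof.
move=> en et; rewrite /ok_upto -!andbA; do 2 congr (_ && _).
apply/forallP/andP => [ok|[/forallP ok eok] f].
  split; last by have := ok e; rewrite en et ltnSn.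
  by apply/forallP => f; apply/implyP => fn; apply/implyP => /ltnW ft; have := ok f; rewrite fn ltnS ft.
apply/implyP => fn; apply/implyP; rewrite ltnS leq_eqVlt => /orP[/eqP ft|ft].
  by rewrite (Hrk (nabla_subE fn) (nabla_subE en)) // ft et.
by have := ok f; rewrite fn ft.
Qed.

Lemma ok_upto_succ_skip t S : (forall f, f \in nabla E pi -> rk f != t) ->
  ok_upto t.+1 S = ok_upto t S.
Proof.
move=> skip; rewrite /ok_upto; congr [&& _, _ & _]; apply: eq_forallb => f.
case: (boolP (f \in nabla E pi)) => //= fn.
by rewrite ltnS leq_eqVlt (negbTE (skip f fn)).
Qed.


Lemma nabla_ok_setD1 t e S : e \in nabla E pi -> rk e = t -> ok_upto t S -> e \in S ->
  nabla_ok S e = ~~ ok_upto t (S :\ e).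
Proof.
move=> en et ok eS; have /and3P[hB piS _] := ok.
rewrite /nabla_ok (spanned_mem (HE (nabla_subE en)) eS) eS /=; apply/idP/idP.
  case/existsP => k /andP[kn /and3P[kr _ nk]]; apply/negP => /ok_uptoP /(_ kn).
  by rewrite -et => /(_ kr) /andP[sk _]; rewrite sk in nk.
apply: contraR => nex.
rewrite /ok_upto (BG_subset hB (subsetDl _ _)) /=; apply/andP; split.
  apply/subsetP => x xpi; rewrite !inE (subsetP piS x xpi) andbT.
  by apply: contraNneq (nabla_notin_pi en) => <-.
apply/forallP => f; apply/implyP => fn; apply/implyP => ft.
have fe : f != e by apply: contraTneq ft => ->; rewrite et ltnn.
have /andP[sf okf] := ok_uptoP ok fn ft.
apply/andP; split.
  case: (boolP (f \in S)) => fS; first by rewrite spanned_mem ?HE ?nabla_subE // !inE fe.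
  apply: contraR nex => nf; apply/existsP; exists f.
  by rewrite fn et ft fS.
apply/implyP; rewrite !inE => /andP[_ fS]; move: okf; rewrite fS /=.
case/existsP => k /andP[kn /and3P[kr kS nk]].
apply/existsP; exists k; rewrite kn kr !inE (negbTE kS) andbF /=.
apply: contra nk; apply: spanned_subset; apply/subsetP => x; rewrite !inE.
by case/and3P => -> _ ->.
Qed.


Lemma nabla_ok_setU1 t e S : e \in nabla E pi -> rk e = t -> ok_upto t S -> e \notin S ->
  nabla_ok S e = ~~ ok_upto t (S :|: [set e]).
Proof.
move=> en et ok eS; have eE := nabla_subE en; have /and3P[hB piS _] := ok.
rewrite /nabla_ok (negbTE eS) andbT.
case: (boolP (spanned S e)) => se.
  apply/esym/negP => /and3P[hB' _ _].
  by have := BG_setU1_nspanned HE (BG_subE hB) eE eS hB'; rewrite se.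
have hB' : S :|: [set e] \in BG E rk.
  by apply: (BG_setU1 HE Hrk) => // f fE; rewrite et; apply: ok_upto_spanned ok fE.
apply/esym/negbF; rewrite /ok_upto hB' (subset_trans piS (subsetUl _ _)) /=.
apply/forallP => f; apply/implyP => fn; apply/implyP => ft.
have /andP[sf okf] := ok_uptoP ok fn ft.
rewrite /nabla_ok (spanned_subset (subsetUl _ _) sf) /=; apply/implyP => fSe.
have fe : f != e by apply: contraTneq ft => ->; rewrite et ltnn.
have fS : f \in S by move: fSe; rewrite !inE (negbTE fe) orbF.
move: okf; rewrite fS /= => /existsP[k /andP[kn /and3P[kr kS nk]]].
have kE := nabla_subE kn.
have ke : k != e by apply: contraTneq kr => ->; rewrite -leqNgt et ltnW.
apply/existsP; exists k; rewrite kn kr !inE (negbTE kS) (negbTE ke) /=.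
apply/negP => sk.
have sk' : spanned ((S :\ f) :|: [set e]) k.
  by apply: spanned_subset sk; apply/subsetP => x; rewrite !inE => /andP[-> /orP[]->]; rewrite ?orbT.
have se' : spanned (S :|: [set k]) e.
  apply: spanned_subset (spanned_exchange (HE kE) (HE eE) nk sk').
  by apply/subsetP => x; rewrite !inE => /orP[/andP[_ ->]|->]; rewrite ?orbT.
have Sk : spanned S k by apply: (ok_upto_spanned ok kE); apply: ltn_trans kr ft.
by move/negP: se; apply; apply: (spanned_spannedU (A := [set k])) se' => x /set1P ->.
Qed.

Lemma nabla_ok_toggle t e S : e \in nabla E pi -> rk e = t -> ok_upto t S ->
  nabla_ok S e = ~~ ok_upto t (toggle e S).
Proof.
rewrite /toggle => en et ok; case: ifP => eS.
  exact: nabla_ok_setD1.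
by apply: nabla_ok_setU1; rewrite ?eS.
Qed.


Lemma sum_ok_upto t : (\sum_(S | ok_upto 0 S) (-1) ^+ ell S =
  \sum_(S | ok_upto t S) (-1) ^+ ell S :> int)%R.
Proof.
elim: t => // t ->.
case: (pickP [pred f in nabla E pi | rk f == t]) => [e /andP[en /eqP et] | none].
  rewrite (sum_sign_involution (toggleK e)); last first.
    move=> S /and3P[hB _ _] /and3P[hB' _ _].
    exact: (sign_toggle HE (nabla_subE en) hB hB').
  apply: eq_bigl => S; rewrite (ok_upto_succ S en et).
  by case ok: (ok_upto t S) => //=; rewrite (nabla_ok_toggle en et ok).
apply: eq_bigl => S; rewrite ok_upto_succ_skip // => f fn.
by have := none f; rewrite /= fn /= => ->.
Qed.


Definition rank_bound := (\max_(f in E) rk f).+1.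

Lemma ok_upto_rank_bound S : ok_upto rank_bound S =
  [&& S \in BG E rk, pi \subset S & [forall e in nabla E pi, nabla_ok S e]].
Proof.
rewrite /ok_upto; congr [&& _, _ & _]; apply: eq_forallb => e.
case: (boolP (e \in nabla E pi)) => //= en.
by rewrite ltnS leq_bigmax_cond // nabla_subE.
Qed.

Lemma nabla_ok_spanning S : pi \subset S -> (forall e, e \in nabla E pi -> nabla_ok S e) ->
  forall f, f \in E -> spanned S f.
Proof.
move=> piS ok f fE; case: (boolP (f \in nabla E pi)) => fn; first by case/andP: (ok f fn).
by have := fn; rewrite (in_nabla HE) // negbK; apply: spanned_subset.
Qed.

Definition counted_basis T :=
  [&& maxset (fun S => S \in BG E rk) T, pi \subset T,
      [forall e1 in nabla E pi,
         [forall f in nabla E pi, rk e1 <= rk f] ==> (e1 \notin T)] &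
      [forall ej in nabla E pi,
         ((ej \in T) && [exists f in nabla E pi, rk f < rk ej]) ==>
         [exists ei in nabla E pi,
            [&& rk ei < rk ej, ei \notin T &
                [exists C, [&& is_cycle E C, C \subset T :|: [set ei] & ej \in C]]]]]].

Lemma nabla_ok_counted_basis T : T \in BG E rk -> pi \subset T ->
  (forall e, e \in nabla E pi -> nabla_ok T e) -> counted_basis T.
Proof.
move=> hB piT ok; have sp := nabla_ok_spanning piT ok.
apply/and4P; split => //; first exact: spanning_BG_maxset.
  apply/forallP => e1; apply/implyP => e1n; apply/implyP => /forallP e1min.
  apply/negP => e1T; have := ok e1 e1n; rewrite /nabla_ok e1T /=.
  case/andP => _ /existsP[k /andP[kn /and3P[kr _ _]]].
  by have := e1min k; rewrite kn /= leqNgt kr.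
apply/forallP => ej; apply/implyP => ejn; apply/implyP => /andP[ejT _].
have := ok ej ejn; rewrite /nabla_ok ejT /=.
case/andP => _ /existsP[k /andP[kn /and3P[kr kT nk]]].
apply/existsP; exists k; rewrite kn kr kT /=.
have kE := nabla_subE kn; have [a [b [ab ke]]] := edge_set2 HE kE.
have := sp k kE; rewrite ke spanned_set2 => /(fundamental_cycle (BG_subE hB)).
rewrite -ke => /(_ kE ab kT) [C [cC sub kC]].
apply/existsP; exists C; rewrite cC sub /=; apply: contraR nk => ejC.
apply: spanned_subset (cycle_edge_spanned HE cC kC).
apply/subsetP => x; rewrite !inE => /andP[xk xC].
have := subsetP sub x xC; rewrite !inE (negbTE xk) orbF => ->; rewrite andbT.
by apply: contraNneq ejC => <-.
Qed.

Lemma counted_basis_nabla_ok T : counted_basis T ->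
  forall e, e \in nabla E pi -> nabla_ok T e.
Proof.
case/and4P => Tmax piT /forallP e1out /forallP ejcycle e en.
have hB := maxsetp Tmax.
rewrite /nabla_ok (maxset_BG_spanning HE Hrk Tmax (nabla_subE en)) /=.
apply/implyP => eT.
have [f fn fr] : exists2 f, f \in nabla E pi & rk f < rk e.
  have := e1out e; rewrite en eT /= => /forallPn [f]; rewrite negb_imply -ltnNge.
  by case/andP => fn fr; exists f.
have := ejcycle e; rewrite en eT /=.
have -> : [exists f in nabla E pi, rk f < rk e] by apply/existsP; exists f; rewrite fn fr.
case/existsP => ei /andP[ein /and3P[eir eiT /existsP[C /and3P[cC sub eC]]]].
apply/existsP; exists ei; rewrite ein eir eiT /=.
apply/negP => sei; move/negP: (BG_setD1_nspanned HE hB eT); apply.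
apply: (spanned_spannedU (A := [set ei])); first by move=> x /set1P ->.
apply: spanned_subset (cycle_edge_spanned HE cC eC); apply/subsetP => x.
rewrite !inE => /andP[xe xC]; have := subsetP sub x xC.
by rewrite !inE => /orP[xT|->]; rewrite ?orbT // xT xe.
Qed.

Lemma ok_upto_rank_boundE T : ok_upto rank_bound T = counted_basis T.
Proof.
rewrite ok_upto_rank_bound; apply/and3P/idP => [[hB piT /forallP ok]|cT].
  by apply: nabla_ok_counted_basis => // e en; have := ok e; rewrite en.
have /and4P[Tmax piT _ _] := cT; split => //; first exact: maxsetp Tmax.
by apply/forallP => e; apply/implyP; apply: counted_basis_nabla_ok.
Qed.

End NablaSweep.

Unset Implicit Arguments. Set Strict Implicit. Set Printing Implicit Defensive.
Local Open Scope ring_scope.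

Theorem lemma3p4 (V : finType) (E : {set {set V}}) (rk : {set V} -> nat)
  (HE : forall e, e \in E -> #|e| = 2%N)
  (Hrk : {in E &, injective rk})
  (pi : {set {set V}}) (Hpi : pi \in BG E rk) :
  \sum_(sigma in BG E rk | pi \subset sigma) (-1) ^+ ell sigma
  = ((-1) ^+ ell E * (#|[set T : {set {set V}} |
        [&& maxset (fun S => S \in BG E rk) T, pi \subset T,
            (* e_1 (the smallest edge of nabla(pi)) is not in T *)
            [forall e1 in nabla E pi,
               [forall f in nabla E pi, (rk e1 <= rk f)%N] ==> (e1 \notin T)] &
            (* for every e_j (j > 1) in T there is i < j with e_i notin T
               and e_j on the cycle of G(T U {e_i}) *)
            [forall ej in nabla E pi,
               ((ej \in T) && [exists f in nabla E pi, (rk f < rk ej)%N]) ==>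
               [exists ei in nabla E pi,
                  [&& (rk ei < rk ej)%N, ei \notin T &
                      [exists C : {set {set V}},
                         [&& is_cycle E C, C \subset T :|: [set ei] & ej \in C]]]]]]]|
       )%:R :> int).
Proof.
rewrite (eq_bigl (ok_upto E rk pi 0)); last by move=> S; rewrite ok_upto0.
rewrite (sum_ok_upto HE Hrk pi (rank_bound E rk)).
rewrite (eq_bigr (fun _ => (-1) ^+ ell E)); last first.
  move=> S; rewrite ok_upto_rank_bound => /and3P[hB piS /forallP ok].
  rewrite (ell_spanning (BG_subE hB)) //; apply: (nabla_ok_spanning (rk := rk) HE piS) => e en.
  by have := ok e; rewrite en.
rewrite mulr_natr -sumr_const; apply: eq_bigl => S.
by rewrite inE ok_upto_rank_boundE.
Qed.
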